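(* Let $B$ be a crystal, $b\in B$ and $b_\mu,b_\nu\in B_S$ such that $\mathrm{wt}(b)+\mathrm{wt}(b_\nu)\in P_+$ and $\mathrm{wt}(b)+\mathrm{wt}(b_\mu)+\mathrm{wt}(b_\nu)\in P_+$. Then for every sequence $i_1,\dots,i_r\in\{1,\dots,n\}$, $\tilde e_{i_r}\cdots\tilde e_{i_1}b_\nu\ne0$ implies $$\tilde f_{i_r}\cdots\tilde f_{i_1}(b\otimes b_\mu)=\tilde f_{i_r}\cdots\tilde f_{i_1}b\otimes b_\mu\neq0.$$
   Context: Let $\mathfrak g$ be of type $D_n$, weights $(\lambda_1,\dots,\lambda_n)$ in an orthonormal basis $\epsilon_j$, simple roots $\alpha_j=\epsilon_j-\epsilon_{j+1}$ ($j<n$), $\alpha_n=\epsilon_{n-1}+\epsilon_n$, $P_+$ the dominant integral weights ($\lambda_j\in\frac12\mathbb Z$, $\lambda_j-\lambda_k\in\mathbb Z$, $\lambda_1\ge\dots\ge\lambda_n$, $\lambda_{n-1}+\lambda_n\ge0$). A crystal means a normal crystal whose connected components are Kashiwara crystals $B_\lambda$ of irreducible $U_q(\mathfrak g)$-modules ($\varepsilon_i,\varphi_i$ = maximal numbers of applications of $\tilde e_i,\tilde f_i$, $\varphi_i-\varepsilon_i=\langle\mathrm{wt},\alpha_i^\vee\rangle$). Tensor product: weights add; $\tilde f_i(a\otimes c)=a\otimes\tilde f_ic$ if $\varepsilon_i(c)\ge\varphi_i(a)$, else $\tilde f_ia\otimes c$; $\tilde e_i(a\otimes c)=a\otimes\tilde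 e_ic$ if $\varepsilon_i(c)>\varphi_i(a)$, else $\tilde e_ia\otimes c$. The spinor crystal $B_S$: sign vectors $(i_1,\dots,i_n)$ of weight $\frac12\sum i_j\epsilon_j$; for $j<n$, $\tilde f_j$ turns $(i_j,i_{j+1})=(+,-)$ into $(-,+)$ (else $0$), $\tilde e_j$ the reverse; $\tilde f_n$ turns $(i_{n-1},i_n)=(+,+)$ into $(-,-)$ (else $0$), $\tilde e_n$ the reverse. *)

From HB Require Import structures.
From mathcomp Require Import all_boot all_order all_algebra.
From mathcomp Require Import ring lra zify.
Set Implicit Arguments. Unset Strict Implicit. Unset Printing Implicit Defensive.
Import Order.TTheory GRing.Theory Num.Theory.
Local Open Scope ring_scope.

Section DefsD.
Variable n : nat.

(* A weight (lambda_1,...,lambda_n) in the orthonormal basis eps_j;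
   coordinates are indexed 1..n via [wcoord]. *)
Definition weight := {ffun 'I_n -> rat}.

Definition wcoord (w : weight) (j : nat) : rat :=
  oapp w 0 (insub j.-1 : option 'I_n).

Definition dnode (i : nat) : bool := (0 < i <= n)%N.

(* simple roots: alpha_i = eps_i - eps_{i+1} (i<n), alpha_n = eps_{n-1}+eps_n *)
Definition alpha (i : nat) : weight :=
  [ffun j : 'I_n =>
     if (i < n)%N then ((j.+1 == i) : nat)%:R - ((j.+1 == i.+1) : nat)%:R
     else ((j.+1 == n.-1) : nat)%:R + ((j.+1 == n) : nat)%:R].

(* <lambda, alpha_i^vee> (simply laced, orthonormal form) *)
Definition pairing (w : weight) (i : nat) : rat :=
  if (i < n)%N then wcoord w i - wcoord w i.+1 else wcoord w n.-1 + wcoord w n.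

Definition is_integer (x : rat) : Prop := exists z : int, x = z%:~R.

Definition dominant (w : weight) : Prop :=
  [/\ (forall j, (0 < j <= n)%N -> is_integer (2 * wcoord w j)),
      (forall j k, (0 < j <= n)%N -> (0 < k <= n)%N ->
          is_integer (wcoord w j - wcoord w k)),
      (forall j, (0 < j < n)%N -> wcoord w j.+1 <= wcoord w j)
    & 0 <= wcoord w n.-1 + wcoord w n].

(* iterate a partial operator k times (None plays the role of 0) *)
Definition oiter (T : Type) (k : nat) (g : T -> option T) (x : T) : option T :=
  iter k (fun o => obind g o) (Some x).

(* apply g_{i_1} first, then g_{i_2}, ..., g_{i_r}: g_{i_r} ... g_{i_1} x *)
Definition opseq (T : Type) (g : nat -> T -> option T) (s : seq nat) (x : T)
  : option T := foldl (fun o i => obind (g i) o) (Some x) s.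

(* A (seminormal) crystal of type D_n: eps_i, phi_i are the maximal numbers
   of applications of e_i, f_i, and phi_i - eps_i = <wt, alpha_i^vee>. *)
Record crystal := Crystal {
  carrier :> Type;
  wt : carrier -> weight;
  ce : nat -> carrier -> option carrier;
  cf : nat -> carrier -> option carrier;
  ceps : nat -> carrier -> nat;
  cphi : nat -> carrier -> nat;
  _ : forall i, dnode i -> forall b b', cf i b = Some b' <-> ce i b' = Some b;
  _ : forall i, dnode i -> forall b b', cf i b = Some b' -> wt b' = wt b - alpha i;
  _ : forall i, dnode i -> forall b,
        oiter (ceps i b) (ce i) b <> None /\ oiter (ceps i b).+1 (ce i) b = None;
  _ : forall i, dnode i -> forall b,
        oiter (cphi i b) (cf i) b <> None /\ oiter (cphi i b).+1 (cf i) b = None;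
  _ : forall i, dnode i -> forall b,
        (cphi i b)%:R - (ceps i b)%:R = pairing (wt b) i
}.

(* Tensor product rule for f_i on A (x) C (Kashiwara convention as in the paper):
   f_i(a (x) c) = a (x) f_i c if eps_i(c) >= phi_i(a), else f_i a (x) c. *)
Definition tens_f (A C : crystal) (i : nat) (p : A * C) : option (A * C) :=
  if (cphi i p.1 <= ceps i p.2)%N then omap (fun c => (p.1, c)) (cf i p.2)
  else omap (fun a => (a, p.2)) (cf i p.1).

(* sign vectors (i_1,...,i_n), true = +, false = - *)
Definition spin := {ffun 'I_n -> bool}.

Definition sget (s : spin) (a : nat) : bool := [exists j : 'I_n, (j.+1 == a) && s j].

Definition supd (s : spin) (a : nat) (va : bool) (b : nat) (vb : bool) : spin :=
  [ffun j : 'I_n => if j.+1 == a then va else if j.+1 == b then vb else s j].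

Definition spin_wt (s : spin) : weight :=
  [ffun j : 'I_n => if s j then 1 / 2 else - (1 / 2)].

Definition pos1 (i : nat) : nat := if (i < n)%N then i else n.-1.
Definition pos2 (i : nat) : nat := if (i < n)%N then i.+1 else n.

Definition flip2 (s : spin) (a : nat) (x : bool) (b : nat) (y : bool)
  (x' y' : bool) : option spin :=
  if (sget s a == x) && (sget s b == y) then Some (supd s a x' b y') else None.

(* f_j : (+,-) -> (-,+) at positions (j, j+1) for j < n;
   f_n : (+,+) -> (-,-) at positions (n-1, n) *)
Definition spin_f (i : nat) (s : spin) : option spin :=
  if ~~ dnode i then None else
  if (i < n)%N then flip2 s (pos1 i) true (pos2 i) false false true
  else flip2 s (pos1 i) true (pos2 i) true false false.

Definition spin_e (i : nat) (s : spin) : option spin :=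
  if ~~ dnode i then None else
  if (i < n)%N then flip2 s (pos1 i) false (pos2 i) true true false
  else flip2 s (pos1 i) false (pos2 i) false true true.

Definition spin_eps (i : nat) (s : spin) : nat := (spin_e i s != None).
Definition spin_phi (i : nat) (s : spin) : nat := (spin_f i s != None).

End DefsD.

Section Spin.
Variable n : nat.
Hypothesis Hn : (1 < n)%N.

Lemma sgetP (s : spin n) (j : 'I_n) a : j.+1 = a -> sget s a = s j.
Proof.
move=> <-; apply/existsP/idP => [[k /andP[/eqP hk sk]]|sj].
  have e : k = j by apply: val_inj; case: hk.
  by rewrite -e.
by exists j; rewrite eqxx.
Qed.

Lemma wcoordP (w : weight n) (j : 'I_n) a : j.+1 = a -> wcoord w a = w j.
Proof. by move=> <-; rewrite /wcoord /= valK. Qed.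

Lemma pos_range i : dnode n i ->
  [/\ (0 < pos1 n i <= n)%N, (0 < pos2 n i <= n)%N & pos1 n i != pos2 n i].
Proof. rewrite /dnode /pos1 /pos2; case: (ltnP i n) => ? /andP[? ?]; split; try lia. all: apply/eqP; lia. Qed.

Lemma sget_upd (s : spin n) a va b vb : (0 < a <= n)%N -> (0 < b <= n)%N -> a != b ->
  sget (supd s a va b vb) a = va /\ sget (supd s a va b vb) b = vb.
Proof.
move=> ha hb hab.
have [ja hja] : exists j : 'I_n, j.+1 = a.
  have h : (a.-1 < n)%N by lia.
  by exists (Ordinal h); rewrite /=; lia.
have [jb hjb] : exists j : 'I_n, j.+1 = b.
  have h : (b.-1 < n)%N by lia.
  by exists (Ordinal h); rewrite /=; lia.
rewrite (sgetP _ hja) (sgetP _ hjb) !ffunE hja hjb eqxx; split=> //.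
by rewrite (eq_sym b a) (negbTE hab) eqxx.
Qed.

Lemma supdK (s : spin n) a va b vb : (0 < a <= n)%N -> (0 < b <= n)%N -> a != b ->
  supd (supd s a va b vb) a (sget s a) b (sget s b) = s.
Proof.
move=> ha hb hab; apply/ffunP => j; rewrite !ffunE.
case: eqP => [ea|_]; first by rewrite (sgetP _ ea).
case: eqP => [eb|_]; first by rewrite (sgetP _ eb).
by [].
Qed.

Lemma flip2P (s s' : spin n) a x b y x' y' :
  (0 < a <= n)%N -> (0 < b <= n)%N -> a != b ->
  flip2 s a x b y x' y' = Some s' <-> flip2 s' a x' b y' x y = Some s.
Proof.
move=> ha hb hab; rewrite /flip2; split.
  case: ifP => // /andP[/eqP ea /eqP eb] [<-].
  have [-> ->] := sget_upd s x' y' ha hb hab; rewrite !eqxx /=.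
  by rewrite -ea -eb supdK.
case: ifP => // /andP[/eqP ea /eqP eb] [<-].
have [-> ->] := sget_upd s' x y ha hb hab; rewrite !eqxx /=.
by rewrite -ea -eb supdK.
Qed.

Lemma flip2_some (s s' : spin n) a x b y x' y' :
  (0 < a <= n)%N -> (0 < b <= n)%N -> a != b ->
  flip2 s a x b y x' y' = Some s' ->
  [/\ sget s a = x, sget s b = y, sget s' a = x', sget s' b = y'
    & s' = supd s a x' b y'].
Proof.
move=> ha hb hab; rewrite /flip2; case: ifP => // /andP[/eqP ea /eqP eb] [<-].
by have [-> ->] := sget_upd s x' y' ha hb hab.
Qed.

Lemma flip2_none (s : spin n) a x b y x' y' :
  (sget s a != x) -> flip2 s a x b y x' y' = None.
Proof. by rewrite /flip2 => /negbTE ->. Qed.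

Lemma spin_ef i : dnode n i -> forall (s s' : spin n),
  spin_f i s = Some s' <-> spin_e i s' = Some s.
Proof.
move=> hi s s'; have [ha hb hab] := pos_range hi.
by rewrite /spin_f /spin_e hi /=; case: ifP => _; apply: flip2P.
Qed.

Lemma oiter0 T (g : T -> option T) x : oiter 0 g x = Some x. Proof. by []. Qed.
Lemma oiter1 T (g : T -> option T) x : oiter 1 g x = g x. Proof. by []. Qed.
Lemma oiter2 T (g : T -> option T) x : oiter 2 g x = obind g (g x). Proof. by []. Qed.

Lemma spin_eps_spec i : dnode n i -> forall (s : spin n),
  oiter (spin_eps i s) (spin_e i) s <> None /\
  oiter (spin_eps i s).+1 (spin_e i) s = None.
Proof.
move=> hi s; have [ha hb hab] := pos_range hi; rewrite /spin_eps.
case E: (spin_e i s) => [s'|] /=; last by rewrite /oiter /= E.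
rewrite /oiter /= E /=; split=> //.
move: E; rewrite /spin_e hi /=; case: ifP => _ /(flip2_some ha hb hab) [_ _ h1 _ _];
  by apply: flip2_none; rewrite h1.
Qed.

Lemma spin_phi_spec i : dnode n i -> forall (s : spin n),
  oiter (spin_phi i s) (spin_f i) s <> None /\
  oiter (spin_phi i s).+1 (spin_f i) s = None.
Proof.
move=> hi s; have [ha hb hab] := pos_range hi; rewrite /spin_phi.
case E: (spin_f i s) => [s'|] /=; last by rewrite /oiter /= E.
rewrite /oiter /= E /=; split=> //.
move: E; rewrite /spin_f hi /=; case: ifP => _ /(flip2_some ha hb hab) [_ _ h1 _ _];
  by apply: flip2_none; rewrite h1.
Qed.

Lemma wcoord_spin (s : spin n) a : (0 < a <= n)%N ->
  wcoord (spin_wt s) a = if sget s a then 1 / 2 else - (1 / 2).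
Proof.
move=> ha; have h : (a.-1 < n)%N by lia.
have hj : (Ordinal h).+1 = a by rewrite /=; lia.
by rewrite (wcoordP _ hj) (sgetP _ hj) ffunE.
Qed.

Lemma spin_phieps i : dnode n i -> forall (s : spin n),
  (spin_phi i s)%:R - (spin_eps i s)%:R = pairing (spin_wt s) i.
Proof.
move=> hi s; have [ha hb hab] := pos_range hi.
rewrite /pairing /spin_phi /spin_eps /spin_f /spin_e hi /=.
have -> : (if (i < n)%N then wcoord (spin_wt s) i - wcoord (spin_wt s) i.+1
   else wcoord (spin_wt s) n.-1 + wcoord (spin_wt s) n) =
   (if (i < n)%N then wcoord (spin_wt s) (pos1 n i) - wcoord (spin_wt s) (pos2 n i)
   else wcoord (spin_wt s) (pos1 n i) + wcoord (spin_wt s) (pos2 n i)).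
  by rewrite /pos1 /pos2; case: ifP.
rewrite !wcoord_spin // /flip2.
by case: ifP => _; case: (sget s (pos1 n i)); case: (sget s (pos2 n i)) => /=;
  rewrite ?eqxx //=; lra.
Qed.

Lemma spin_wtf i : dnode n i -> forall (s s' : spin n),
  spin_f i s = Some s' -> spin_wt s' = spin_wt s - alpha n i.
Proof.
move=> hi s s'; have [ha hb hab] := pos_range hi.
have key : forall x y x' y', flip2 s (pos1 n i) x (pos2 n i) y x' y' = Some s' ->
   forall j : 'I_n, s' j = (if j.+1 == pos1 n i then x' else
                           if j.+1 == pos2 n i then y' else s j) /\
   (j.+1 == pos1 n i -> s j = x) /\ (j.+1 == pos2 n i -> s j = y).
  move=> x y x' y' /(flip2_some ha hb hab) [e1 e2 _ _ ->] j; rewrite ffunE; split=> //.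
  by split=> /eqP h; rewrite -(sgetP _ h).
rewrite /spin_f hi /=; case: ifP => hin /key {}key; apply/ffunP => j;
  rewrite !ffunE; have [-> [k1 k2]] := key j; rewrite hin;
  move: k1 k2; rewrite /pos1 /pos2 hin.
- case: (eqVneq j.+1 i) => [e|ne].
    move=> /(_ isT) ->.
    have -> : (j.+1 == i.+1) = false by rewrite e; apply/eqP; lia.
    by move=> _ /=; lra.
  case: (eqVneq j.+1 i.+1) => [e|ne'] _.
    by move=> /(_ isT) ->; rewrite /=; lra.
  by move=> _; case: (s j) => /=; lra.
- case: (eqVneq j.+1 n.-1) => [e|ne].
    move=> /(_ isT) ->; rewrite (_ : (j.+1 == n) = false) /=; first lra.
    apply/negbTE; rewrite e; apply/eqP; lia.
  case: (eqVneq j.+1 n) => [e|ne'] _.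
    by move=> /(_ isT) ->; rewrite /=; lra.
  by move=> _; case: (s j) => /=; lra.
Qed.
End Spin.

Definition spinor (n : nat) (Hn : (1 < n)%N) : crystal n :=
  @Crystal n (spin n) (@spin_wt n) (@spin_e n) (@spin_f n) (@spin_eps n) (@spin_phi n)
    (@spin_ef n Hn) (@spin_wtf n Hn) (@spin_eps_spec n Hn) (@spin_phi_spec n Hn)
    (@spin_phieps n Hn).

Arguments ce {n} c i x.
Arguments cf {n} c i x.
Arguments ceps {n} c i x.
Arguments cphi {n} c i x.
Arguments tens_f {n} A C i p.

From HB Require Import structures.
From mathcomp Require Import all_boot all_order all_algebra.
From mathcomp Require Import lra.
Set Implicit Arguments. Unset Strict Implicit. Unset Printing Implicit Defensive.
Import Order.TTheory GRing.Theory Num.Theory.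
Local Open Scope ring_scope.

(* A spinor b_nu with e_i b_nu <> 0 has
   eps_i = 1, phi_i = 0, hence <wt b_nu, alpha_i^vee> = -1; the two dominance
   conditions then force phi_i(b) > eps_i(b_mu) (if e_i b_mu <> 0 it also
   contributes -1), so by the tensor rule f_i acts on the left factor b.
   Replacing (b, b_nu) by (f_i b, e_i b_nu) leaves wt b + wt b_nu and
   wt b + wt b_mu + wt b_nu unchanged, so both hypotheses persist. *)

Lemma opseq_cons (T : Type) (g : nat -> T -> option T) i s x :
  opseq g (i :: s) x = if g i x is Some y then opseq g s y else None.
Proof. by rewrite /opseq /=; case: (g i x) => //=; elim: s. Qed.

Section Weights.
Variable n : nat.

Lemma wcoordD (w1 w2 : weight n) j : wcoord (w1 + w2) j = wcoord w1 j + wcoord w2 j.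
Proof. by rewrite /wcoord; case: insub => [k|] /=; rewrite ?ffunE ?addr0. Qed.

Lemma pairingD (w1 w2 : weight n) i : pairing (w1 + w2) i = pairing w1 i + pairing w2 i.
Proof. by rewrite /pairing !wcoordD; case: ifP => _; lra. Qed.

Lemma dominant_pairing_ge0 (w : weight n) i : dnode n i -> dominant w -> 0 <= pairing w i.
Proof.
rewrite /dnode /pairing => /andP[i_gt0 _] [_ _ decr last_ge0].
by case: ifP => // i_lt_n; have := decr i; rewrite i_gt0 i_lt_n => /(_ isT); lra.
Qed.

End Weights.

Section CrystalAxioms.
Variables (n : nat) (B : crystal n) (i : nat).
Hypothesis hi : dnode n i.

Lemma crystal_fe (b b' : B) : cf B i b = Some b' <-> ce B i b' = Some b.
Proof. by case: B b b' => ? ? ? ? ? ? fe ? ? ? ?; exact: fe. Qed.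

Lemma crystal_wt_f (b b' : B) : cf B i b = Some b' -> wt b' = wt b - alpha n i.
Proof. by case: B b b' => ? ? ? ? ? ? ? wt_f ? ? ?; exact: wt_f. Qed.

Lemma crystal_phi_eps (b : B) :
  (cphi B i b)%:R - (ceps B i b)%:R = pairing (wt b) i.
Proof. by case: B b => ? ? ? ? ? ? ? ? ? ? phi_eps; exact: phi_eps. Qed.

Lemma crystal_cf_phi_gt0 (b : B) : (0 < cphi B i b)%N -> exists b', cf B i b = Some b'.
Proof.
case: B b => C wt ce cf ceps cphi _ _ _ phi_spec _ /= b.
have [+ _] := phi_spec i hi b; case: (cphi i b) => [|k] // + _.
rewrite /oiter iterSr /=; case: (cf i b) => [b'|]; first by exists b'.
by case; elim: k => //= k ->.
Qed.

Lemma pairing_le_cphi (b : B) : pairing (wt b) i <= (cphi B i b)%:R.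
Proof. by rewrite -crystal_phi_eps lerBlDr lerDl. Qed.

End CrystalAxioms.

Lemma wtD_cf_ce n i (A C : crystal n) (a a' : A) (c c' : C) : dnode n i ->
  cf A i a = Some a' -> ce C i c = Some c' -> wt a' + wt c' = wt a + wt c.
Proof.
move=> hi /(crystal_wt_f hi) -> /(crystal_fe hi) /(crystal_wt_f hi) ->.
by rewrite addrAC addrA.
Qed.

Lemma tens_f_left n i (A C : crystal n) (a : A) (c : C) :
  (ceps C i c < cphi A i a)%N ->
  tens_f A C i (a, c) = omap (fun a' => (a', c)) (cf A i a).
Proof. by move=> lt_eps_phi; rewrite /tens_f /= leqNgt lt_eps_phi. Qed.

Section Spinor.
Variables (n : nat) (Hn : (1 < n)%N).

Lemma spin_e_none_or_f_none i (s : spin n) : spin_e i s = None \/ spin_f i s = None.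
Proof.
rewrite /spin_e /spin_f; case: (dnode n i) => /=; last by left.
by rewrite /flip2; case: (sget s (pos1 n i)) => /=; case: ifP => _; [left|left|right|right].
Qed.

Lemma spin_pairing_e i (s : spin n) : dnode n i -> spin_e i s != None ->
  pairing (spin_wt s) i = -1.
Proof.
move=> hi e_s; rewrite -(spin_phieps Hn hi) /spin_phi /spin_eps e_s.
by case: (spin_e_none_or_f_none i s) => f_s; [rewrite f_s in e_s | rewrite f_s].
Qed.

Lemma spin_eps_lt_cphi (B : crystal n) (b : B) (bmu bnu : spinor Hn) i :
  dnode n i -> spin_e i bnu != None ->
  dominant (wt b + wt bnu) -> dominant (wt b + wt bmu + wt bnu) ->
  (spin_eps i bmu < cphi B i b)%N.
Proof.
move=> hi e_nu /(dominant_pairing_ge0 hi) D1 /(dominant_pairing_ge0 hi) D2.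
rewrite !pairingD /= (spin_pairing_e hi e_nu) in D1 D2.
rewrite -(ltr_nat rat); apply: lt_le_trans (pairing_le_cphi hi b).
rewrite /spin_eps; case: eqP => [_|/eqP e_mu] /=; first lra.
by rewrite (spin_pairing_e hi e_mu) in D2; lra.
Qed.

End Spinor.

Theorem proposition4p4 (n : nat) (Hn : (1 < n)%N) (B : crystal n) (b : B)
    (bmu bnu : spinor Hn) :
  dominant (wt b + wt bnu) ->
  dominant (wt b + wt bmu + wt bnu) ->
  forall s : seq nat, all (dnode n) s ->
  opseq (ce (spinor Hn)) s bnu <> None ->
  exists b' : B,
    opseq (cf B) s b = Some b' /\
    opseq (tens_f B (spinor Hn)) s (b, bmu) = Some (b', bmu).
Proof.
move=> + + s; elim: s b bnu => [|i s IH] b bnu D1 D2; first by exists b.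
move=> /= /andP[hi hs]; rewrite !opseq_cons /=.
case e_nu: (spin_e i bnu) => [bnu'|] // hop.
have lt_eps_phi : (spin_eps i bmu < cphi B i b)%N.
  by apply: spin_eps_lt_cphi D1 D2 => //; rewrite e_nu.
have [b1 f_b] := crystal_cf_phi_gt0 hi (leq_ltn_trans (leq0n _) lt_eps_phi).
have wt_inv := wtD_cf_ce hi f_b (e_nu : ce (spinor Hn) i bnu = Some bnu').
rewrite f_b tens_f_left // f_b /=.
by apply: IH hs hop; rewrite ?wt_inv // addrAC wt_inv addrAC.
Qed.
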